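(* Let $k\ge1$, $j\ge0$, $n=k+j$ and $N\in\mathcal{OC}_{k,j}$. Then $$\sum_{\{e',e''\}\subseteq \mathrm{ToT}(N),\ e'\neq e''}A_C(N(e',e''))=(2n^2+n-2)A_C(N)-(2n-1),$$ where the sum ranges over unordered pairs of distinct edges of $\mathrm{ToT}(N)$.
   Context: A (planted, binary) phylogenetic network on a taxon set $X$ with $|X|=n$ is a finite acyclic directed graph with: - a unique root $\rho$ of indegree 0 and outdegree 1; - exactly $n$ nodes of indegree 1 and outdegree 0 (leaves), labeled bijectively by $X$; - every other node is either a tree node (indegree 1, outdegree 2) or a reticulation node (indegree 2, outdegree 1). An edge $(p,q)$ is a tree edge if $q$ is a tree node or a leaf. A network is simplex if the child of every reticulation node is a leaf. A node $u$ is an ancestor of a node $v\neq u$ if some directed path from $\rho$ to $v$ passes through $u$. The ancestor number $\alpha_N(v)$ is the number of ancestors of $v$. The top tree component $C(N)$ of a simplex network $N$ is the set of tree nodes and leaves not descending from any reticulation node. Define $A_C(N)=\sum_{v\in C(N)}\alpha_N(v)$. $\mathrm{ToT}(N)$ is the set of tree edges $(u,v)$ of $N$ with $u$ not a reticulation node, i.e. the tree edges of the top tree component. For $k\ge1$, $j\ge0$, $\mathcal{OC}_{k,j}$ is the set of simplex networks on taxa $\{1,\dots,k+j\}$ with exactly $j$ reticulation nodes, whose children are the leaves $k+1,\dots,k+j$. For $N\in\mathcal{OC}_{k,j}$ and distinct $e'=(u,v)$, $e''=(s,t)$ in $\mathrm{ToT}(N)$, the network $N(e',e'')$ is obtained from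 $N$ as follows: - subdivide $e'$ into $(u,p),(p,v)$ and $e''$ into $(s,q),(q,t)$, with new nodes $p,q$; - add a new reticulation node $r$ with edges $(p,r),(q,r)$; - add a new leaf labeled $n+1$ with edge $(r,n+1)$. *)

From mathcomp Require Import all_boot.
From mathcomp Require Import boolp.
Set Implicit Arguments. Unset Strict Implicit. Unset Printing Implicit Defensive.

Record net := Net {
  V : seq nat;
  E : seq (nat * nat);         (* directed edges (parent, child) *)
  root : nat;
  lab : nat -> nat             (* leaf labelling (only meaningful on leaves) *)
}.

Section Net.
Variable N : net.

Definition arc (a b : nat) : bool := (a, b) \in E N.
Definition indeg (v : nat) : nat := count (fun e => e.2 == v) (E N).
Definition outdeg (v : nat) : nat := count (fun e => e.1 == v) (E N).

Definition is_tree (v : nat) : bool := (v \in V N) && (indeg v == 1) && (outdeg v == 2).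
Definition is_leaf (v : nat) : bool := (v \in V N) && (indeg v == 1) && (outdeg v == 0).
Definition is_ret  (v : nat) : bool := (v \in V N) && (indeg v == 2) && (outdeg v == 1).

Definition is_ancestor (u v : nat) : Prop :=
  u <> v /\ exists p : seq nat,
    path arc (root N) p /\ last (root N) p = v /\ u \in root N :: p.

Definition alpha (v : nat) : nat := count (fun u => `[< is_ancestor u v >]) (V N).

Definition desc_ret (v : nat) : Prop :=
  exists r, is_ret r /\ exists p : seq nat, path arc r p /\ last r p = v.

Definition in_top (v : nat) : bool := (is_tree v || is_leaf v) && `[< ~ desc_ret v >].

Definition A_C : nat := \sum_(v <- V N | in_top v) alpha v.

Definition ToT : seq (nat * nat) :=
  [seq e <- E N | (is_tree e.2 || is_leaf e.2) && ~~ is_ret e.1].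

Definition is_network (n : nat) : Prop :=
  [/\ [/\ uniq (V N), uniq (E N),
      all (fun e => (e.1 \in V N) && (e.2 \in V N)) (E N) &
      (forall v p, path arc v p -> last v p = v -> p = [::])],
      [/\ root N \in V N, indeg (root N) = 0, outdeg (root N) = 1 &
          forall v, v \in V N -> indeg v = 0 -> v = root N],
      (forall v, v \in V N -> v != root N -> [|| is_tree v, is_leaf v | is_ret v]) &
      perm_eq [seq lab N v | v <- V N & is_leaf v] (iota 1 n)].

Definition is_simplex : Prop :=
  forall r w, is_ret r -> arc r w -> is_leaf w.

Definition is_OC (k j : nat) : Prop :=
  [/\ is_network (k + j), is_simplex,
      count is_ret (V N) = j &
      perm_eq [seq lab N w | w <- V N & has (fun u => is_ret u && arc u w) (V N)]
              (iota k.+1 j)].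

End Net.

(* The network N(e',e'') (leaf labelled n+1), with fresh node names. *)
Definition insert_ret (n : nat) (N : net) (e1 e2 : nat * nat) : net :=
  let m := (\max_(x <- V N) x).+1 in
  let p := m in let q := m.+1 in let r := m.+2 in let l := m.+3 in
  Net (V N ++ [:: p; q; r; l])
      ([seq e <- E N | (e != e1) && (e != e2)] ++
         [:: (e1.1, p); (p, e1.2); (e2.1, q); (q, e2.2); (p, r); (q, r); (r, l)])
      (root N)
      (fun x => if x == l then n.+1 else lab N x).

From Pilot Require Import Defs.
From mathcomp Require Import all_boot all_order all_algebra.
From mathcomp Require Import boolp zify.

(* A node x of the top tree component C(N) is reached from the root by a single
   path whose nodes all have one parent, so the ancestors of x are exactly the
   nodes on that path.  Subdividing the tree edges (u,v) and (s,t) by new nodes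
   p and q thus gives one more ancestor to each node of C(N) that is v or t or
   lies below them, and adds p and q to C(N), with alpha(p) = alpha(v) +
   [t is an ancestor of v] since p becomes the parent of v (symmetrically for
   q); the new reticulation and its leaf stay outside C.  The edges of ToT(N)
   are in bijection with their heads, the nodes of C(N), and degree counting
   gives |C(N)| = 2n - 1.  Summing over pairs of edges, the contributions
   #{x in C : v = x or v is an ancestor of x} + alpha(v) of the nodes v of C
   total 2 A_C(N), and the ancestor relations inside C number A_C(N) - |C(N)|. *)

Set Implicit Arguments. Unset Strict Implicit. Unset Printing Implicit Defensive.

Lemma count_sumb (T : Type) (P : pred T) (s : seq T) : count P s = \sum_(x <- s) P x.
Proof. by rewrite -sum1_count big_mkcond. Qed.

Lemma count_gt1 (T : eqType) (P : pred T) (s : seq T) x y :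
  x != y -> x \in s -> y \in s -> P x -> P y -> 1 < count P s.
Proof.
move=> neq_xy xs ys Px Py; rewrite -size_filter.
apply: (@uniq_leq_size _ [:: x; y]); first by rewrite /= inE neq_xy.
by move=> z; rewrite !inE => /orP[]/eqP->; rewrite mem_filter ?Px ?Py.
Qed.

Definition ancestorb (N : net) (u x : nat) : bool := `[< is_ancestor N u x >].

Definition self_or_ancestorb (N : net) (u x : nat) : bool := (u == x) || ancestorb N u x.

Lemma alphaE (N : net) x : alpha N x = count (ancestorb N ^~ x) (V N).
Proof. by []. Qed.

Section Digraph.
Variable G : net.
Local Notation arc := (Defs.arc G).
Local Notation rho := (Defs.root G).

Lemma tree_deg v : is_tree G v -> indeg G v = 1 /\ outdeg G v = 2.
Proof. by case/andP => /andP[_ /eqP ->] /eqP ->. Qed.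

Lemma leaf_deg v : is_leaf G v -> indeg G v = 1 /\ outdeg G v = 0.
Proof. by case/andP => /andP[_ /eqP ->] /eqP ->. Qed.

Lemma ret_deg v : is_ret G v -> indeg G v = 2 /\ outdeg G v = 1.
Proof. by case/andP => /andP[_ /eqP ->] /eqP ->. Qed.

Lemma tree_leafF v : is_tree G v -> is_leaf G v = false.
Proof. by move=> /tree_deg[_ outdeg_v]; rewrite /is_leaf outdeg_v andbF. Qed.

Lemma ret_V v : is_ret G v -> v \in V G.
Proof. by case/andP => /andP[]. Qed.

Lemma tree_or_leaf_indeg v : is_tree G v || is_leaf G v -> indeg G v = 1.
Proof. by case/orP => [/tree_deg|/leaf_deg] []. Qed.

Lemma indeg1_parent_uniq y a b : indeg G y = 1 -> arc a y -> arc b y -> a = b.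
Proof.
move=> indeg_y a_y b_y; apply/eqP/negPn/negP => neq_ab.
have neq_arcs : (a, y) != (b, y) by apply: contra neq_ab => /eqP[->].
have := count_gt1 (P := fun e : nat * nat => e.2 == y) neq_arcs a_y b_y.
by rewrite -/(indeg G y) indeg_y /= eqxx => /(_ isT isT).
Qed.

Lemma indeg0_arcF y a : indeg G y = 0 -> ~~ arc a y.
Proof.
move=> indeg_y; apply/negP => ay.
have : 0 < indeg G y by rewrite /indeg -has_count; apply/hasP; exists (a, y).
by rewrite indeg_y.
Qed.

Lemma outdeg0_arcF y a : outdeg G y = 0 -> ~~ arc y a.
Proof.
move=> outdeg_y; apply/negP => ya.
have : 0 < outdeg G y by rewrite /outdeg -has_count; apply/hasP; exists (y, a).
by rewrite outdeg_y.
Qed.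

Lemma path_parent h c y : path arc h c -> y \in c -> exists2 z, z \in h :: c & arc z y.
Proof.
elim: c h => // a c IHc h /= /andP[ha pc]; rewrite inE => /orP[/eqP->|yc].
  by exists h; rewrite ?mem_head.
by have [z zc zy] := IHc _ pc yc; exists z; rewrite // in_cons zc orbT.
Qed.

(* As every node on it has a single parent, a root chain is the only path from
   the root to its endpoint. *)
Definition root_chain x c :=
  [/\ path arc rho c, last rho c = x & all (fun y => indeg G y == 1) c].

Lemma root_chain_prefix x c u : root_chain x c -> u \in c ->
  exists2 c', root_chain u c' & {subset c' <= c}.
Proof.
move=> [pc _ c_indeg1] uc; case/splitPr: uc pc c_indeg1 => c1 c2.
rewrite cat_path all_cat /= => /andP[pc1 /andP[au _]] /andP[c1_indeg1 /andP[u_indeg1 _]].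
exists (rcons c1 u); first by split; rewrite ?last_rcons ?rcons_path ?all_rcons ?pc1 ?au ?u_indeg1.
by move=> z; rewrite mem_rcons mem_cat !inE => /orP[->|->]; rewrite ?orbT.
Qed.

Lemma root_chain_rcons x c y : root_chain x (rcons c y) -> root_chain (last rho c) c.
Proof. by case; rewrite rcons_path all_rcons => /andP[pc _] _ /andP[_ c_indeg1]. Qed.

Hypothesis indeg_root : indeg G rho = 0.

Lemma root_chain_backward x c : root_chain x c ->
  forall w q, path arc w q -> last w q \in rho :: c -> all (mem (rho :: c)) (w :: q).
Proof.
move=> [pc _ c_indeg1] w q; elim/last_ind: q w => [w _ /= ->//|q y IHq w].
rewrite rcons_path last_rcons => /andP[pq ay] yc.
have zc : last w q \in rho :: c.
  case/predU1P: yc => [yr|yc].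
    by move: ay; rewrite yr (negbTE (indeg0_arcF _ indeg_root)).
  have [z zc zy] := path_parent pc yc.
  by rewrite (indeg1_parent_uniq (eqP (allP c_indeg1 y yc)) ay zy).
by rewrite -cats1 -cat_cons all_cat IHq //= yc.
Qed.

Lemma root_chain_last x c : root_chain x c -> x \in rho :: c.
Proof. by case=> _ <- _; exact: mem_last. Qed.

Lemma ancestor_root_chain x c : root_chain x c ->
  forall u, is_ancestor G u x <-> u <> x /\ u \in rho :: c.
Proof.
move=> ch u; split.
  move=> [ux [p [pp [lp up]]]]; split => //.
  have := root_chain_backward ch pp; rewrite lp.
  by move=> /(_ (root_chain_last ch)) /allP; apply.
by move=> [ux uc]; case: ch => pc lc _; split => //; exists c.
Qed.

Lemma ancestorb_root_chain x c : root_chain x c ->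
  forall u, ancestorb G u x = (u != x) && (u \in rho :: c).
Proof.
move=> ch u; apply: (asbool_equiv_eqP andP).
by apply: iff_trans (ancestor_root_chain ch u) _; split => -[/eqP ux uc].
Qed.

Lemma self_or_ancestorb_root_chain x c a : root_chain x c -> x != rho -> a != rho ->
  self_or_ancestorb G a x = (a \in c).
Proof.
move=> ch xr ar; rewrite /self_or_ancestorb (ancestorb_root_chain ch) in_cons (negbTE ar).
have [-> | //] := eqVneq a x; move: (root_chain_last ch).
by rewrite in_cons (negbTE xr).
Qed.

Lemma alpha_root_chain_parent w y c :
  root_chain y (rcons (rcons c w) y) -> y \notin rho :: rcons c w ->
  alpha G y = alpha G w + count_mem w (V G).
Proof.
move=> ch_y y_notin; have := root_chain_rcons ch_y; rewrite last_rcons => ch_w.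
have anc_y u : ancestorb G u y = (u == w) || ancestorb G u w.
  rewrite (ancestorb_root_chain ch_y) (ancestorb_root_chain ch_w).
  have [-> | neq_uy] := eqVneq u y.
    rewrite (negbTE y_notin) andbF orbF; apply/esym/negbTE.
    by apply: contraNneq y_notin => ->; rewrite in_cons mem_rcons mem_head orbT.
  rewrite !in_cons !mem_rcons !in_cons (negbTE neq_uy) /= mem_rcons in_cons.
  by case: (u == w); case: (u == rho); case: (u \in c).
have no_self : count (predI (pred1 w) (ancestorb G ^~ w)) (V G) = 0.
  apply/eqP; rewrite -leqn0 leqNgt -has_count; apply/hasPn => z _ /=.
  by apply/andP => -[/eqP -> /asboolP[]].
rewrite !alphaE addnC; have := count_predUI (pred1 w) (ancestorb G ^~ w) (V G).
by rewrite no_self addn0 => <-; apply: eq_count => u; exact: anc_y.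
Qed.

Lemma root_chain_not_desc_ret x c : root_chain x c -> ~ desc_ret G x.
Proof.
move=> ch [r [ret_r [q [pq lq]]]].
have := root_chain_backward ch pq; rewrite lq => /(_ (root_chain_last ch)) /andP[].
case/predU1P=> [rr | rc] _; first by move: ret_r; rewrite rr /is_ret indeg_root andbF.
case: ch => _ _ /allP /(_ r rc) /eqP.
by move: ret_r; rewrite /is_ret => /andP[/andP[_ /eqP->]].
Qed.

End Digraph.

Definition ret_child (N : net) x := has (fun u => is_ret N u && Defs.arc N u x) (V N).

Section SimplexNetwork.
Variables (N : net) (n : nat).
Hypotheses (netN : is_network N n) (simplexN : is_simplex N).
Local Notation arc := (Defs.arc N).
Local Notation rho := (Defs.root N).
Local Notation VN := (V N).
Local Notation EN := (E N).

Lemma uniq_V : uniq VN. Proof. by case: netN => [[]]. Qed.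
Lemma uniq_E : uniq EN. Proof. by case: netN => [[]]. Qed.
Lemma root_in_V : rho \in VN. Proof. by case: netN => _ []. Qed.
Lemma indeg_root : indeg N rho = 0. Proof. by case: netN => _ []. Qed.
Lemma outdeg_root : outdeg N rho = 1. Proof. by case: netN => _ []. Qed.

Lemma indeg0_root v : v \in VN -> indeg N v = 0 -> v = rho.
Proof. by case: netN => _ [_ _ _ root_uniq] _ _; apply: root_uniq. Qed.

Lemma node_kinds v : v \in VN -> v != rho -> [|| is_tree N v, is_leaf N v | is_ret N v].
Proof. by case: netN => _ _ kinds _; apply: kinds. Qed.

Lemma edge_in_V e : e \in EN -> (e.1 \in VN) && (e.2 \in VN).
Proof. by case: netN => [[_ _ /allP ends _]] _ _ _; apply: ends. Qed.

Lemma arc_in_V a b : arc a b -> (a \in VN) /\ (b \in VN).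
Proof. by move/edge_in_V/andP. Qed.

Lemma path_in_V w c : path arc w c -> {subset c <= VN}.
Proof.
elim: c w => //= a c IHc w /andP[wa pc] y; rewrite inE => /predU1P[->|]; last exact: (IHc _ pc y).
exact: (arc_in_V wa).2.
Qed.

Lemma path_start_notin w c : path arc w c -> w \notin c.
Proof.
move=> pc; apply/negP => wc; case/path.splitP: wc pc => c1 c2.
rewrite cat_path => /andP[pc1 _].
have [[_ _ _ acyclic] _ _ _] := netN.
by move: (acyclic _ _ pc1); rewrite last_rcons => /(_ erefl)/eqP; rewrite -size_eq0 size_rcons.
Qed.

Lemma path_uniq w c : path arc w c -> uniq (w :: c).
Proof.
elim: c w => // a c IHc w pc; move: (pc) => /= /andP[_ pc'].
by have /= -> := IHc _ pc'; rewrite (path_start_notin pc).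
Qed.

Lemma walk_back x m : x \in VN ->
  (exists c, path arc rho c /\ last rho c = x) \/
  (exists w c, [/\ w \in VN, path arc w c, last w c = x & size c = m]).
Proof.
move=> xV; elim: m => [|m [|[w [c [wV pc lc sc]]]]]; [by right; exists x, [::] | by left |].
have [wr|wr] := eqVneq w rho; first by left; exists c; rewrite -wr.
have : 0 < indeg N w.
  by rewrite lt0n; apply: contra wr => /eqP/(indeg0_root wV)->.
rewrite /indeg -has_count => /hasP [[w' w0] we /= /eqP ew]; subst w0.
right; exists w', (w :: c); split; rewrite /= ?sc //.
- by case: (arc_in_V we).
- by rewrite /Defs.arc we.
Qed.

Lemma reachable x : x \in VN -> exists c, path arc rho c /\ last rho c = x.
Proof.
move=> xV; case: (walk_back (size VN) xV) => // [[w [c [wV pc _ sc]]]].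
have : size (w :: c) <= size VN.
  apply: uniq_leq_size; first exact: path_uniq pc.
  by move=> z /predU1P[->|/(path_in_V pc)].
by rewrite /= sc ltnn.
Qed.

Lemma desc_ret_child x : is_tree N x || is_leaf N x -> desc_ret N x <-> ret_child N x.
Proof.
move=> tl_x; split.
  move=> [r [ret_r [[|w q] [pq lq]]]].
    by move: lq tl_x => /= <-; rewrite /is_tree /is_leaf (ret_deg ret_r).1 /= !andbF.
  move: pq => /= /andP[rw pq]; have leaf_w := simplexN ret_r rw.
  case: q pq lq => [_ /= wx|w' q /= /andP[ww' _] _].
    by apply/hasP; exists r; [case/andP: ret_r => /andP[] | rewrite ret_r -wx].
  by move: ww'; rewrite (negbTE (outdeg0_arcF _ (leaf_deg leaf_w).2)).
move=> /hasP[r _ /andP[ret_r rx]]; exists r; split => //.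
by exists [:: x]; rewrite /= rx.
Qed.

Lemma in_topE x : in_top N x = (is_tree N x || is_leaf N x) && ~~ ret_child N x.
Proof.
rewrite /in_top; case tl_x: (_ || _) => //=.
by rewrite asbool_neg (asbool_equiv_eq (desc_ret_child tl_x)) asboolb.
Qed.

Lemma in_top_V x : in_top N x -> x \in VN.
Proof. by rewrite in_topE /is_tree /is_leaf => /andP[/orP[]/andP[]/andP[] ->]. Qed.

Lemma in_top_indeg x : in_top N x -> indeg N x = 1.
Proof. by rewrite in_topE => /andP[/tree_or_leaf_indeg]. Qed.

Lemma top_neq_root x : in_top N x -> x != rho.
Proof. by apply: contraTneq => ->; rewrite /in_top /is_tree /is_leaf indeg_root !andbF. Qed.

Lemma in_top_root_chain x : in_top N x -> exists c, root_chain N x c.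
Proof.
move=> top_x; have [c [pc lc]] := reachable (in_top_V top_x).
exists c; split => //; apply/allP => y yc.
move: top_x; rewrite /in_top => /andP[tl_x /asboolP no_ret_x].
case/splitPr: yc pc lc => c1 c2; rewrite cat_path /= => /andP[_ /andP[ay pc2]] lc.
have yr : y != rho.
  by apply: contraTneq ay => ->; exact: indeg0_arcF indeg_root.
case/or3P: (node_kinds (arc_in_V ay).2 yr) => [/tree_deg[->]|/leaf_deg[->]|ret_y] //.
exfalso; case: c2 pc2 lc => [_|z c3 /= /andP[yz pc3]]; rewrite last_cat /=.
  by move=> yx; move: tl_x; rewrite -yx /is_tree /is_leaf (ret_deg ret_y).1 /= !andbF.
have leaf_z := simplexN ret_y yz.
case: c3 pc3 => [_ /= zx|z' c4 /= /andP[zz' _] _].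
  by apply: no_ret_x; exists y; split => //; exists [:: z]; rewrite /= yz zx.
by move: zz'; rewrite (negbTE (outdeg0_arcF _ (leaf_deg leaf_z).2)).
Qed.

Lemma ancestor_root_top x : in_top N x -> is_ancestor N rho x.
Proof.
move=> top_x; have [c ch] := in_top_root_chain top_x.
apply/(ancestor_root_chain indeg_root ch); split; last exact: mem_head.
by apply/eqP; rewrite eq_sym top_neq_root.
Qed.

Lemma ancestor_top x u : in_top N x -> is_ancestor N u x -> u = rho \/ in_top N u.
Proof.
move=> top_x; have [c ch] := in_top_root_chain top_x.
move/(ancestor_root_chain indeg_root ch) => [_ /predU1P[->|uc]]; [by left | right].
have [c' ch' _] := root_chain_prefix ch uc.
have [pc _ /allP/(_ u uc)/eqP u_indeg1] := ch.
have ur : u != rho by apply: contra_eqN u_indeg1 => /eqP->; rewrite indeg_root.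
rewrite /in_top; apply/andP; split; last exact/asboolP/(root_chain_not_desc_ret indeg_root ch').
by case/or3P: (node_kinds (path_in_V pc uc) ur) => [->|->|/ret_deg[]]; rewrite ?orbT // u_indeg1.
Qed.

Lemma ToT_top e : e \in ToT N -> e \in EN /\ in_top N e.2.
Proof.
rewrite mem_filter => /andP[/andP[tl_e nret] eE]; split => //.
rewrite in_topE tl_e /=; apply/hasP => [[r _ /andP[ret_r re]]].
have ee : arc e.1 e.2 by rewrite /Defs.arc -surjective_pairing.
by move: nret; rewrite -(indeg1_parent_uniq (tree_or_leaf_indeg tl_e) re ee) ret_r.
Qed.

Lemma perm_ToT_top : perm_eq (map snd (ToT N)) (filter (in_top N) VN).
Proof.
apply: uniq_perm; last first.
- move=> v; rewrite mem_filter; apply/mapP/andP.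
    by move=> [e /ToT_top[_ top_e] ->]; split => //; exact: in_top_V.
  move=> [top_v vV]; have := in_top_indeg top_v.
  move: top_v; rewrite in_topE => /andP[tl_v no_ret_v] /eqP.
  rewrite eqn_leq => /andP[_]; rewrite /indeg -has_count => /hasP[[w v'] we /= /eqP ev].
  subst v'; exists (w, v) => //; rewrite mem_filter we andbT /= tl_v /=.
  apply: contra no_ret_v => ret_w; apply/hasP; exists w; last by rewrite ret_w.
  by have /andP[] := edge_in_V we.
- exact: filter_uniq uniq_V.
rewrite map_inj_in_uniq; first exact: filter_uniq uniq_E.
move=> [a b] [a' b'] /ToT_top[ab top_b] /ToT_top[ab' _] /= eb; subst b'.
by rewrite (indeg1_parent_uniq (in_top_indeg top_b) ab ab').
Qed.

Lemma sum_count_edges (f : nat * nat -> nat) (Q : pred (nat * nat)) :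
  {in EN, forall e, f e \in VN} ->
  \sum_(v <- VN) count (fun e => (f e == v) && Q e) EN = count Q EN.
Proof.
move=> fV; under eq_bigr do rewrite count_sumb.
rewrite exchange_big /= count_sumb big_seq [RHS]big_seq; apply: eq_bigr => e eE.
rewrite -count_sumb; case: (Q e).
  rewrite (eq_count (a2 := pred1 (f e))) ?count_uniq_mem ?uniq_V ?fV // => v.
  by rewrite andbT eq_sym.
by rewrite (eq_count (a2 := pred0)) ?count_pred0 // => v; rewrite andbF.
Qed.

Lemma sum_indeg : \sum_(v <- VN) indeg N v = size EN.
Proof.
rewrite -(count_predT EN) -(sum_count_edges (f := snd)) => [|e /edge_in_V/andP[] //].
by apply: eq_bigr => v _; apply: eq_count => e; rewrite andbT.
Qed.

Lemma sum_outdeg : \sum_(v <- VN) outdeg N v = size EN.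
Proof.
rewrite -(count_predT EN) -(sum_count_edges (f := fst)) => [|e /edge_in_V/andP[] //].
by apply: eq_bigr => v _; apply: eq_count => e; rewrite andbT.
Qed.

Lemma count_ret_child : count (ret_child N) VN = count (is_ret N) VN.
Proof.
have ret_children v : v \in VN ->
    count (fun e => (e.2 == v) && is_ret N e.1) EN = ret_child N v.
  move=> vV; case: (boolP (ret_child N v)) => [rcv | /hasPn no_rc] /=.
    have [r _ /andP[ret_r rv]] := hasP rcv; apply/eqP; rewrite eqn_leq -has_count.
    apply/andP; split; last by apply/hasP; exists (r, v); rewrite //= eqxx.
    by rewrite -(leaf_deg (simplexN ret_r rv)).1; apply: sub_count => e /andP[].
  apply/eqP; rewrite -leqn0 leqNgt -has_count; apply/hasP => -[[a b] ab /= /andP[/eqP bv ret_a]].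
  by subst b; move: (no_rc a (arc_in_V ab).1); rewrite ret_a => /negP[].
have ret_outdeg v : count (fun e => (e.1 == v) && is_ret N e.1) EN = is_ret N v.
  case: (boolP (is_ret N v)) => [ret_v | nret_v] /=.
    rewrite -(ret_deg ret_v).2; apply: eq_count => e /=.
    by case: eqP => // ->; rewrite ret_v.
  rewrite (eq_count (a2 := pred0)) ?count_pred0 // => e /=.
  by case: eqP => // ->; rewrite (negbTE nret_v).
rewrite !count_sumb -(eq_big_seq _ ret_children).
rewrite (sum_count_edges (f := snd)) => [|e /edge_in_V/andP[] //].
rewrite -(sum_count_edges (f := fst)) => [|e /edge_in_V/andP[] //].
by apply: eq_bigr => v _; rewrite ret_outdeg.
Qed.

Lemma node_degrees v : v \in VN ->
  indeg N v = is_tree N v + is_leaf N v + 2 * is_ret N v /\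
  outdeg N v = (v == rho) + 2 * is_tree N v + is_ret N v.
Proof.
move=> vV; rewrite /is_tree /is_leaf /is_ret vV /=.
have [->|vr] := eqVneq v rho; first by rewrite indeg_root outdeg_root.
by case/or3P: (node_kinds vV vr); rewrite /is_tree /is_leaf /is_ret vV /= => /andP[/eqP-> /eqP->].
Qed.

Lemma in_top_ret_child v : in_top N v + ret_child N v = is_tree N v + is_leaf N v.
Proof.
rewrite in_topE; case: (boolP (ret_child N v)) => [rcv | _].
  have [r _ /andP[ret_r rv]] := hasP rcv; have leaf_v := simplexN ret_r rv.
  have tree_vF : is_tree N v = false by apply: contraTF leaf_v => /tree_leafF ->.
  by rewrite leaf_v tree_vF.
by rewrite andbT addn0; case: (boolP (is_tree N v)) => [/tree_leafF -> | _].
Qed.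

Lemma size_top : (size (filter (in_top N) VN)).+1 = 2 * n.
Proof.
have [_ _ _ labels] := netN.
have leaves : count (is_leaf N) VN = n.
  by rewrite -size_filter -(size_map (lab N)) (perm_size labels) size_iota.
have roots : count (fun v : nat => v == rho) VN = 1.
  by rewrite (count_uniq_mem rho uniq_V) root_in_V.
have in_sum := sum_indeg; have out_sum := sum_outdeg.
rewrite (eq_big_seq _ (fun v vV => (node_degrees vV).1)) in in_sum.
rewrite (eq_big_seq _ (fun v vV => (node_degrees vV).2)) in out_sum.
have top_sum : \sum_(v <- VN) (in_top N v + ret_child N v) =
    \sum_(v <- VN) (is_tree N v + is_leaf N v).
  by apply: eq_bigr => v _; exact: in_top_ret_child.
rewrite /= !big_split /= !big1_eq -!count_sumb in in_sum out_sum top_sum.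
have := count_ret_child; rewrite size_filter; lia.
Qed.

End SimplexNetwork.

Definition weight (N : net) (v : nat) : nat :=
  \sum_(x <- V N | in_top N x) self_or_ancestorb N v x + alpha N v.

Definition insert_gain (N : net) (v t : nat) : nat := weight N v + ancestorb N t v.

Section Insertion.
Variables (N : net) (n : nat).
Hypotheses (netN : is_network N n) (simplexN : is_simplex N).
Variables e1 e2 : nat * nat.
Hypotheses (e1_ToT : e1 \in ToT N) (e2_ToT : e2 \in ToT N) (neq_e12 : e1 != e2).
Local Notation arc := (Defs.arc N).
Local Notation rho := (Defs.root N).
Local Notation VN := (V N).
Local Notation EN := (E N).
Local Notation N' := (insert_ret n N e1 e2).
Local Notation arc' := (Defs.arc N').
Local Notation M := (\max_(x <- VN) x).
Local Notation p := M.+1.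
Local Notation q := M.+2.
Local Notation r := M.+3.
Local Notation l := M.+4.
Local Notation u := e1.1.
Local Notation v := e1.2.
Local Notation s := e2.1.
Local Notation t := e2.2.
Local Notation new_edges := [:: (u, p); (p, v); (s, q); (q, t); (p, r); (q, r); (r, l)].

Lemma le_max_V y : y \in VN -> y <= M.
Proof. by move=> yV; exact: (@leq_bigmax_seq _ _ xpredT id). Qed.

Lemma new_notin_V z : M < z -> z \notin VN.
Proof. by apply: contraTN => /le_max_V; rewrite -leqNgt. Qed.

Lemma e1_E : e1 \in EN. Proof. by case: (ToT_top simplexN e1_ToT). Qed.
Lemma e2_E : e2 \in EN. Proof. by case: (ToT_top simplexN e2_ToT). Qed.
Lemma top_v : in_top N v. Proof. by case: (ToT_top simplexN e1_ToT). Qed.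
Lemma top_t : in_top N t. Proof. by case: (ToT_top simplexN e2_ToT). Qed.

Lemma endpoints_V : [/\ u \in VN, v \in VN, s \in VN & t \in VN].
Proof. by have /andP[-> ->] := edge_in_V netN e1_E; have /andP[-> ->] := edge_in_V netN e2_E. Qed.

Lemma endpoints_lt_p : [/\ u < p, v < p, s < p & t < p].
Proof. by have [/le_max_V ? /le_max_V ? /le_max_V ? /le_max_V ?] := endpoints_V. Qed.

Lemma neq_vt : v != t.
Proof.
apply: contra neq_e12 => /eqP vt.
have ut : arc u t by rewrite -vt /Defs.arc -surjective_pairing e1_E.
have st : arc s t by rewrite /Defs.arc -surjective_pairing e2_E.
have us := indeg1_parent_uniq (in_top_indeg simplexN top_t) ut st.
by rewrite [e1]surjective_pairing [e2]surjective_pairing us vt.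
Qed.

Ltac eval_fresh_eqs :=
  rewrite ?eqxx; repeat match goal with |- context[?a == ?b] =>
    rewrite (_ : (a == b) = false); last by apply/eqP; lia end.

Lemma count_insert_edges (P : pred (nat * nat)) :
  count P (E N') + P e1 + P e2 = count P EN + count P new_edges.
Proof.
have perm_E : perm_eq EN (e1 :: e2 :: [seq e <- EN | (e != e1) && (e != e2)]).
  apply: uniq_perm; first exact: uniq_E netN.
    by rewrite /= !inE !mem_filter !eqxx /= !andbF orbF neq_e12 filter_uniq ?(uniq_E netN).
  move=> e; rewrite !inE mem_filter.
  by case: (eqVneq e e1) => [->|]; [rewrite e1_E | case: (eqVneq e e2) => [->|] //=; rewrite e2_E].
by rewrite (permP perm_E) count_cat /=; lia.
Qed.

Lemma deg_insert_old y : y \in VN -> indeg N' y = indeg N y /\ outdeg N' y = outdeg N y.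
Proof.
move=> /le_max_V yM; rewrite /indeg /outdeg.
have := count_insert_edges (fun e => e.2 == y); have := count_insert_edges (fun e => e.1 == y).
by rewrite /=; eval_fresh_eqs; lia.
Qed.

Lemma deg_insert_new z : M < z ->
  indeg N' z = count (fun e : nat * nat => e.2 == z) new_edges /\
  outdeg N' z = count (fun e : nat * nat => e.1 == z) new_edges.
Proof.
move=> Mz; have z_new (y : nat) : y \in VN -> (y == z) = false.
  by move=> /le_max_V yM; apply/eqP; lia.
have no_old (f : nat * nat -> nat) : {in EN, forall e, f e \in VN} ->
    count (fun e => f e == z) EN = 0.
  move=> fV; apply/eqP; rewrite -leqn0 leqNgt -has_count.
  by apply/hasPn => e /fV /z_new ->.
have := count_insert_edges (fun e => e.2 == z); have := count_insert_edges (fun e => e.1 == z).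
rewrite !no_old => [| e /(edge_in_V netN)/andP[] // | e /(edge_in_V netN)/andP[] //].
by have [/z_new -> /z_new -> /z_new -> /z_new ->] := endpoints_V; rewrite /indeg /outdeg /=; lia.
Qed.

Let edge (i : bool) := if i then e1 else e2.
Let mid (i : bool) := if i then p else q.

Lemma tree_mid i : is_tree N' (mid i).
Proof.
have [? ? ? ?] := endpoints_lt_p; rewrite /is_tree /= mem_cat !inE.
have [-> ->] := @deg_insert_new (mid i) ltac:(case: i => /=; lia).
by case: i => /=; eval_fresh_eqs; rewrite ?orbT.
Qed.

Lemma ret_r : is_ret N' r.
Proof.
have [? ? ? ?] := endpoints_lt_p; rewrite /is_ret /= mem_cat !inE.
have [-> ->] := @deg_insert_new r ltac:(lia).
by rewrite /=; eval_fresh_eqs; rewrite ?orbT.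
Qed.

Lemma kinds_insert_old y : y \in VN ->
  [/\ is_tree N' y = is_tree N y, is_leaf N' y = is_leaf N y & is_ret N' y = is_ret N y].
Proof.
move=> yV; have [indeg_y outdeg_y] := deg_insert_old yV.
by rewrite /is_tree /is_leaf /is_ret indeg_y outdeg_y /= mem_cat yV.
Qed.

Lemma arcs_insert_new : [/\ arc' u p, arc' p v, arc' s q, arc' q t & arc' r l].
Proof. by rewrite /Defs.arc /= !mem_cat !inE !eqxx !orbT. Qed.

Lemma arc_insert_old a b : arc a b -> b != v -> b != t -> arc' a b.
Proof.
move=> ab bv bt; rewrite /Defs.arc in ab *; rewrite /= mem_cat mem_filter ab andbT; apply/orP; left.
by apply/andP; split; [apply: contra bv | apply: contra bt] => /eqP <-.
Qed.

Definition lift_node b := if b == v then [:: p; b] else if b == t then [:: q; b] else [:: b].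
Definition lift_path c := flatten (map lift_node c).

Lemma lift_path_cons b c : lift_path (b :: c) = lift_node b ++ lift_path c.
Proof. by []. Qed.

Lemma lift_path_rcons c b : lift_path (rcons c b) = lift_path c ++ lift_node b.
Proof. by rewrite /lift_path map_rcons flatten_rcons. Qed.

Lemma mem_lift_path y c :
  y \in lift_path c = [|| y \in c, (y == p) && (v \in c) | (y == q) && (t \in c)].
Proof.
have tv := negbTE (neq_vt); rewrite eq_sym in tv.
elim: c => [|b c IHc]; first by rewrite /lift_path !in_nil !andbF.
rewrite lift_path_cons mem_cat IHc !in_cons /lift_node.
have [-> | bv] := eqVneq b v; first rewrite !inE tv.
  by case: (y == p); case: (y == v); case: (y \in c);
    case: (y == q); case: (v \in c); case: (t \in c).
have [-> | bt] := eqVneq b t; first rewrite !inE.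
  by case: (y == p); case: (y == q); case: (y == t); case: (y \in c);
    case: (v \in c); case: (t \in c).
rewrite !inE.
by case: (y == p); case: (y == q); case: (y == b); case: (y \in c);
  case: (v \in c); case: (t \in c).
Qed.

Lemma path_lift_node a b : arc a b -> path arc' a (lift_node b) /\ last a (lift_node b) = b.
Proof.
have [uv_arc' pv_arc' sq_arc' qt_arc' _] := arcs_insert_new.
have uv_arc : arc u v by rewrite /Defs.arc -surjective_pairing e1_E.
have st_arc : arc s t by rewrite /Defs.arc -surjective_pairing e2_E.
move=> ab; rewrite /lift_node; have [bv | bv] := eqVneq b v.
  subst b; rewrite (indeg1_parent_uniq (in_top_indeg simplexN top_v) ab uv_arc).
  by rewrite /= uv_arc' pv_arc'.
have [bt | bt] := eqVneq b t.
  subst b; rewrite (indeg1_parent_uniq (in_top_indeg simplexN top_t) ab st_arc).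
  by rewrite /= sq_arc' qt_arc'.
by rewrite /= arc_insert_old.
Qed.

Lemma path_lift_path w c :
  path arc w c -> path arc' w (lift_path c) /\ last w (lift_path c) = last w c.
Proof.
elim: c w => [|b c IHc] w //= /andP[wb pc].
have [pb lb] := path_lift_node wb; have [pc' lc'] := IHc _ pc.
by rewrite lift_path_cons cat_path pb lb pc' last_cat lb lc'.
Qed.

Lemma indeg_root_insert : indeg N' (Defs.root N') = 0.
Proof. by rewrite (deg_insert_old (root_in_V netN)).1 (indeg_root netN). Qed.

Lemma root_chain_lift x c : root_chain N x c -> root_chain N' x (lift_path c).
Proof.
move=> [pc lc c_indeg1]; have [pc' lc'] := path_lift_path pc; split; rewrite /= ?lc' //.
apply/allP => z; rewrite mem_lift_path => /or3P[zc | /andP[/eqP-> _] | /andP[/eqP-> _]].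
- by rewrite (deg_insert_old (path_in_V netN pc zc)).1; exact: (allP c_indeg1).
- by have := tree_mid true; rewrite /is_tree => /andP[/andP[_ ->]].
by have := tree_mid false; rewrite /is_tree => /andP[/andP[_ ->]].
Qed.

Lemma desc_ret_lift x : desc_ret N x -> desc_ret N' x.
Proof.
move=> [z [ret_z [c [pc lc]]]]; exists z; split.
  by have [_ _ ->] := kinds_insert_old (ret_V ret_z).
by exists (lift_path c); have [pc' lc'] := path_lift_path pc; rewrite lc'.
Qed.

Lemma in_top_insert_old y : y \in VN -> in_top N' y = in_top N y.
Proof.
move=> yV; have [tree_y leaf_y _] := kinds_insert_old yV.
rewrite /in_top tree_y leaf_y; case tl_y: (_ || _) => //=.
case: (asboolP (desc_ret N y)) => [desc_y | ndesc_y].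
  by rewrite !asboolF // => /(_ (desc_ret_lift desc_y)).
have top_y : in_top N y by rewrite /in_top tl_y; apply/asboolP.
have [c ch] := in_top_root_chain netN simplexN top_y.
rewrite (asboolT ndesc_y) asboolT //.
exact: (root_chain_not_desc_ret indeg_root_insert (root_chain_lift ch)).
Qed.

Lemma alpha_insert_old x : in_top N x ->
  alpha N' x = alpha N x + self_or_ancestorb N v x + self_or_ancestorb N t x.
Proof.
move=> top_x; have [c ch] := in_top_root_chain netN simplexN top_x.
have ch' := root_chain_lift ch; have [pc _ _] := ch.
have [xM rhoM] := (le_max_V (in_top_V simplexN top_x), le_max_V (root_in_V netN)).
have anc_old y : y \in VN -> ancestorb N' y x = ancestorb N y x.
  move=> /le_max_V yM; rewrite (ancestorb_root_chain indeg_root_insert ch').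
  rewrite (ancestorb_root_chain (indeg_root netN) ch) /= in_cons mem_lift_path.
  by eval_fresh_eqs; rewrite !orbF.
have anc_new z : M < z -> ancestorb N' z x = [|| (z == p) && (v \in c) | (z == q) && (t \in c)].
  move=> Mz; have zc : z \in c = false by apply: contraNF (new_notin_V Mz) => /(path_in_V netN pc).
  rewrite (ancestorb_root_chain indeg_root_insert ch') /= in_cons mem_lift_path zc.
  by eval_fresh_eqs.
have sv := self_or_ancestorb_root_chain (indeg_root netN) ch (top_neq_root netN top_x).
rewrite (sv _ (top_neq_root netN top_v)) (sv _ (top_neq_root netN top_t)).
rewrite !alphaE /= count_cat (eq_in_count anc_old) /= !anc_new; try lia.
by eval_fresh_eqs; rewrite /= !orbF !addn0 !addnA.
Qed.

Lemma lift_node_mid i : lift_node (edge i).2 = [:: mid i; (edge i).2].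
Proof. by case: i; rewrite /lift_node /= eqxx // eq_sym (negbTE neq_vt). Qed.

Lemma root_chain_mid i : exists c,
  root_chain N' (edge i).2 (rcons (rcons c (mid i)) (edge i).2) /\
  (edge i).2 \notin rho :: rcons c (mid i).
Proof.
have top_b : in_top N (edge i).2 by case: i; [exact: top_v | exact: top_t].
have [bM br] := (le_max_V (in_top_V simplexN top_b), top_neq_root netN top_b).
have [c ch] := in_top_root_chain netN simplexN top_b; have [pc lc _] := ch.
case/lastP: c ch pc lc => [_ _ /= rb | c b' ch pc]; first by rewrite rb eqxx in br.
rewrite last_rcons => eb; subst b'.
exists (lift_path c); split.
  by have := root_chain_lift ch; rewrite lift_path_rcons lift_node_mid -cats1 -!cats1 -catA.
have := path_uniq netN pc; rewrite /= rcons_uniq mem_rcons in_cons => /andP[_ /andP[bc _]].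
rewrite in_cons mem_rcons in_cons mem_lift_path (negbTE bc) (negbTE br).
by case: i bM {top_b br ch pc bc} => /= bM; rewrite /= ?orbF; eval_fresh_eqs.
Qed.

Lemma in_top_mid i : in_top N' (mid i).
Proof.
have [c [ch _]] := root_chain_mid i; have := root_chain_rcons ch; rewrite last_rcons => ch_mid.
rewrite /in_top tree_mid; apply/asboolP.
exact: (root_chain_not_desc_ret indeg_root_insert ch_mid).
Qed.

Lemma alpha_mid i : alpha N' (mid i) + 1 = alpha N' (edge i).2.
Proof.
have [c [ch b_notin]] := root_chain_mid i.
rewrite (alpha_root_chain_parent indeg_root_insert ch b_notin) /= count_cat.
rewrite (count_memPn (new_notin_V (_ : M < mid i))) /=; last by case: i {ch b_notin}.
by case: i {ch b_notin}; rewrite /mid; eval_fresh_eqs.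
Qed.

Lemma not_top_ret_leaf : in_top N' r = false /\ in_top N' l = false.
Proof.
have [_ _ _ _ rl_arc] := arcs_insert_new.
split; apply/negP => /andP[tl].
  by move: tl; rewrite /is_tree /is_leaf (ret_deg ret_r).1 !andbF.
by move=> /asboolP; apply; exists r; split; [exact: ret_r | exists [:: l]; rewrite /= rl_arc].
Qed.

Lemma A_C_insert : A_C N' = A_C N + insert_gain N v t + insert_gain N t v.
Proof.
have [top_p top_q] : in_top N' p /\ in_top N' q := conj (in_top_mid true) (in_top_mid false).
have [alpha_p alpha_q] : alpha N' p + 1 = alpha N' v /\ alpha N' q + 1 = alpha N' t :=
  conj (alpha_mid true) (alpha_mid false).
have [top_r top_l] := not_top_ret_leaf.
have tv := negbTE neq_vt; rewrite eq_sym in tv.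
move: alpha_p alpha_q; rewrite (alpha_insert_old top_v) (alpha_insert_old top_t).
rewrite /self_or_ancestorb !eqxx tv (negbTE neq_vt) /= => alpha_p alpha_q.
rewrite /A_C /insert_gain /weight /= big_cat /= !big_cons big_nil top_p top_q top_r top_l /=.
have -> : \sum_(x <- VN | in_top N' x) alpha N' x = \sum_(x <- VN | in_top N x)
    (alpha N x + self_or_ancestorb N v x + self_or_ancestorb N t x).
  rewrite big_seq_cond [RHS]big_seq_cond; apply: eq_big => x.
    by case xV: (x \in VN); rewrite //= in_top_insert_old.
  by move=> /andP[xV]; rewrite in_top_insert_old // => /alpha_insert_old.
by rewrite !big_split /=; lia.
Qed.

End Insertion.

Lemma sum_ordered_pairs m (h : nat -> nat -> nat) :
  \sum_(i < m) \sum_(i' < m | i < i') (h i i' + h i' i) + \sum_(i < m) h i i =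
  \sum_(i < m) \sum_(i' < m) h i i'.
Proof.
have split_row (i : 'I_m) : \sum_(i' < m) h i i' =
    \sum_(i' < m | i < i') h i i' + \sum_(i' < m | i' < i) h i i' + h i i.
  rewrite (bigID (fun i' : 'I_m => i < i')) /= -addnA; congr (_ + _).
  rewrite (bigD1 i) /= -?leqNgt // addnC; congr (_ + _); apply: eq_bigl => i'.
  by rewrite -leqNgt ltn_neqAle andbC.
rewrite (eq_bigr _ (fun i _ => split_row i)).
under [in LHS]eq_bigr do rewrite big_split.
rewrite !big_split /= -!addnA; congr (_ + (_ + _)).
under eq_bigr do rewrite big_mkcond. under [RHS]eq_bigr do rewrite big_mkcond.
by rewrite exchange_big.
Qed.

Lemma sum_ordered_pairs_const m a :
  2 * \sum_(i < m) \sum_(i' < m | i < i') a + m * a = m * m * a.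
Proof.
have := sum_ordered_pairs m (fun _ _ => a).
under eq_bigr do rewrite big_split /= addnn -mul2n.
by rewrite -big_distrr /= !big_const_ord !iter_addn_0; lia.
Qed.

Section Counting.
Variables (N : net) (n : nat).
Hypotheses (netN : is_network N n) (simplexN : is_simplex N).
Local Notation rho := (Defs.root N).
Local Notation VN := (V N).
Local Notation C := [seq x <- VN | in_top N x].

Lemma alpha_top x : in_top N x -> alpha N x = \sum_(y <- C) ancestorb N y x + 1.
Proof.
move=> top_x; rewrite alphaE count_sumb big_filter (bigID (in_top N)) /=; congr (_ + _).
have non_top_anc y : ~~ in_top N y -> ancestorb N y x = (y == rho).
  move=> ntop_y; apply/asboolP/eqP => [/(ancestor_top netN simplexN top_x)[] // | ->].
    by move=> top_y; rewrite top_y in ntop_y.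
  exact: (ancestor_root_top netN simplexN top_x).
rewrite (eq_bigr (fun y => (y == rho) : nat)) => [|y /non_top_anc -> //].
rewrite -big_filter -count_sumb.
have ntop_rho : ~~ in_top N rho by apply/negP => /(top_neq_root netN); rewrite eqxx.
have := count_uniq_mem rho (filter_uniq (predC (in_top N)) (uniq_V netN)).
by rewrite mem_filter /= ntop_rho (root_in_V netN) /= => <-.
Qed.

Lemma A_C_top : A_C N = \sum_(x <- C) alpha N x.
Proof. by rewrite big_filter. Qed.

Lemma sum_self_or_ancestorb y : in_top N y -> \sum_(x <- C) self_or_ancestorb N x y = alpha N y.
Proof.
move=> top_y; have split_or x : (self_or_ancestorb N x y : nat) = (x == y) + ancestorb N x y.
  by rewrite /self_or_ancestorb; case: eqVneq => [-> | //]; rewrite /ancestorb asboolF // => -[].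
rewrite (eq_bigr _ (fun x _ => split_or x)) big_split /= (alpha_top top_y) addnC.
congr (_ + _); rewrite -count_sumb (eq_count (a2 := pred1 y)) => [|x]; last by rewrite /= eq_sym.
by rewrite count_uniq_mem ?filter_uniq ?(uniq_V netN) // mem_filter top_y (in_top_V simplexN top_y).
Qed.

Lemma sum_weight : \sum_(x <- C) weight N x = 2 * A_C N.
Proof.
rewrite /weight (eq_bigr (fun x => \sum_(y <- C) self_or_ancestorb N x y + alpha N x)).
  rewrite big_split /= exchange_big /= A_C_top mul2n -addnn; congr (_ + _).
  rewrite big_seq [RHS]big_seq; apply: eq_bigr => y.
  by rewrite mem_filter => /andP[/sum_self_or_ancestorb].
by move=> x _; rewrite big_filter.
Qed.

Lemma sum_ancestorb : \sum_(x <- C) \sum_(y <- C) ancestorb N y x + size C = A_C N.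
Proof.
rewrite A_C_top -sum1_size -big_split /= big_seq [RHS]big_seq; apply: eq_bigr => x.
by rewrite mem_filter => /andP[/alpha_top ->].
Qed.

Local Notation T := (ToT N).
Local Notation m := (size (ToT N)).
Local Notation top_node i := (nth 0 (map snd T) i).

Lemma sum_ToT (H : nat -> nat) : \sum_(i < m) H (top_node i) = \sum_(x <- C) H x.
Proof. by rewrite -(perm_big _ (perm_ToT_top netN simplexN)) (big_nth 0) size_map big_mkord. Qed.

Lemma size_ToT : m.+1 = 2 * n.
Proof.
by rewrite -(size_map snd) (perm_size (perm_ToT_top netN simplexN)) (size_top netN simplexN).
Qed.

Local Notation gain i i' := (insert_gain N (top_node i) (top_node i')).

Lemma A_C_insert_ToT (i i' : 'I_m) : i < i' ->
  A_C (insert_ret n N (nth (0, 0) T i) (nth (0, 0) T i')) = A_C N + (gain i i' + gain i' i).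
Proof.
move=> lt_ii'; have uniq_T : uniq T := filter_uniq _ (uniq_E netN).
have neq : nth (0, 0) T i != nth (0, 0) T i'.
  by rewrite nth_uniq // neq_ltn lt_ii'.
rewrite (A_C_insert netN simplexN (mem_nth _ (ltn_ord i)) (mem_nth _ (ltn_ord i')) neq).
by rewrite !(nth_map (0, 0)) // addnA.
Qed.

Lemma sum_insert_gain_pairs :
  \sum_(i < m) \sum_(i' < m | i < i') (gain i i' + gain i' i) + 2 * A_C N + m =
  (2 * m + 1) * A_C N.
Proof.
have diag : \sum_(i < m) gain i i = 2 * A_C N.
  rewrite -sum_weight -(sum_ToT (weight N)); apply: eq_bigr => i _.
  by rewrite /insert_gain /ancestorb asboolF ?addn0 // => -[].
have full : \sum_(i < m) \sum_(i' < m) gain i i' =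
    m * \sum_(x <- C) weight N x + \sum_(x <- C) \sum_(y <- C) ancestorb N y x.
  rewrite -(sum_ToT (weight N)) -(sum_ToT (fun x => \sum_(y <- C) ancestorb N y x)).
  rewrite big_distrr -big_split /=; apply: eq_bigr => i _.
  rewrite /insert_gain big_split /= -(sum_ToT (fun y => ancestorb N y (top_node i))).
  by rewrite big_const_ord iter_addn_0 mulnC.
have size_C : size C = m by rewrite -(perm_size (perm_ToT_top netN simplexN)) size_map.
have := sum_ordered_pairs m (fun i i' => gain i i'); rewrite diag full sum_weight => ->.
by rewrite -sum_ancestorb size_C; lia.
Qed.

Lemma sum_A_C_insert_ToT :
  \sum_(i < m) \sum_(i' < m | i < i') A_C (insert_ret n N (nth (0, 0) T i) (nth (0, 0) T i'))
    + 2 * n + 2 * A_C N = (2 * n ^ 2 + n) * A_C N + 1.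
Proof.
have -> : \sum_(i < m) \sum_(i' < m | i < i')
      A_C (insert_ret n N (nth (0, 0) T i) (nth (0, 0) T i')) =
    \sum_(i < m) \sum_(i' < m | i < i') A_C N +
    \sum_(i < m) \sum_(i' < m | i < i') (gain i i' + gain i' i).
  rewrite -big_split; apply: eq_bigr => i _; rewrite -big_split.
  by apply: eq_bigr => i' /A_C_insert_ToT.
have := sum_ordered_pairs_const m (A_C N); have := sum_insert_gain_pairs.
set P := \sum_(i < m) \sum_(i' < m | i < i') A_C N.
set Q := \sum_(i < m) \sum_(i' < m | i < i') (_ + _).
move: P Q (A_C N) size_ToT => P Q A.
case: n => [|n'] // [->] pairs_gain pairs_A; nia.
Qed.


End Counting.

Unset Implicit Arguments.
Local Open Scope ring_scope.

Theorem mainTheorem7 (k j : nat) (N : net) :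
  (1 <= k)%N -> is_OC N k j ->
  ((\sum_(i < size (ToT N)) \sum_(i' < size (ToT N) | (i < i')%N)
       A_C (insert_ret (k + j) N (nth (0, 0)%N (ToT N) i) (nth (0, 0)%N (ToT N) i')))%N)%:Z
  = ((2 * (k + j) ^ 2 + (k + j))%N%:Z - 2) * (A_C N)%:Z - ((2 * (k + j))%N%:Z - 1).
Proof.
move=> _ [netN simplexN _ _]; have := sum_A_C_insert_ToT netN simplexN.
set S := (\sum_(i < size (ToT N)) _)%N.
move: S (A_C N) (k + j)%N => S A n; lia.
Qed.
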